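(* Let $(X,S,\beta)$ be a virtual pair, $H$ a group, and let $(f,g)$ and $(\tilde f,g)$ be two cohomologous noncommutative 2-cocycle pairs $X\times X\to H$. Then for every oriented virtual link diagram $L=K_1\cup\dots\cup K_r$, every coloring $\mathcal C$ of $L$ by $(X,S,\beta)$ and every $i$, $[\Psi_i(L,\mathcal C,f,g)]=[\Psi_i(L,\mathcal C,\tilde f,g)]$ (equality of conjugacy classes in $H$).
   Context: For a bijection $\sigma\colon X\times X\to X\times X$ write $\sigma(x,y)=(\sigma^1(x,y),\sigma^2(x,y))$. A biquandle is a bijection $\sigma$ satisfying $(\mathrm{id}\times\sigma)(\sigma\times\mathrm{id})(\mathrm{id}\times\sigma)=(\sigma\times\mathrm{id})(\mathrm{id}\times\sigma)(\sigma\times\mathrm{id})$, such that for all $x,z$ there is a unique $y$ with $\sigma^1(x,y)=z$, for all $y,t$ there is a unique $x$ with $\sigma^2(x,y)=t$, and there is a bijection $s_\sigma$ with $\{(x,y):\sigma(x,y)=(x,y)\}=\{(x,s_\sigma(x))\}$. A virtual pair $(X,S,\beta)$: biquandles $(X,S),(X,\beta)$ with $\beta^2=\mathrm{id}$ and $(\mathrm{id}\times\beta)(S\times\mathrm{id})(\mathrm{id}\times\beta)=(\beta\times\mathrm{id})(\mathrm{id}\times S)(\beta\times\mathrm{id})$; write $s=s_S$, $s_\beta$. A noncommutative 2-cocycle pair is $f,g\colon X\times X\to H$ with, for all $x,y,z$: (f1) $f(x,y)f(S^2(x,y),z)=f(x,S^1(y,z))f(S^2(x,S^1(y,z)),S^2(y,z))$;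 (f2) $f(S^1(x,y),S^1(S^2(x,y),z))=f(y,z)$; (f3) $f(x,s(x))=1$; (g1) $g(x,s_\beta(x))=1$; (g2) $g(x,y)g(\beta(x,y))=1$; (g3) $g(x,y)g(\beta^2(x,y),z)=g(x,\beta^1(y,z))g(\beta^2(x,\beta^1(y,z)),\beta^2(y,z))$; (g4) $g(y,z)g(\beta^2(x,\beta^1(y,z)),\beta^2(y,z))=g(x,y)g(\beta^1(x,y),\beta^1(\beta^2(x,y),z))$; (g5) $g(y,z)g(x,\beta^1(y,z))=g(\beta^2(x,y),z)g(\beta^1(x,y),\beta^1(\beta^2(x,y),z))$; (m1) $g(y,z)=g(S^1(x,y),\beta^1(S^2(x,y),z))$; (m2) $g(y,z)g(x,\beta^1(y,z))=g(S^2(x,y),z)g(S^1(x,y),\beta^1(S^2(x,y),z))$; (m3) $g(x,\beta^1(y,z))f(\beta^2(x,\beta^1(y,z)),\beta^2(y,z))=f(x,y)g(S^2(x,y),z)$. $(f,g)$ and $(\tilde f,g)$ are cohomologous if there is $\lambda\colon X\to H$ with $\tilde f(x,y)=\lambda(x)f(x,y)\lambda(S^2(x,y))^{-1}$ for all $x,y$, where for all $x,y$: $\lambda(x)=\lambda(s_S(x))$, $\lambda(y)=\lambda(S^1(x,y))$, $\lambda(y)=\lambda(\beta^1(x,y))$, and $\lambda(x)$ commutes with $g(x,y)$. Colorings and $\Psi_i$: drawing each crossing with both strands oriented downward, a coloring assigns elements of $X$ to semi-arcs such that at a positive classical crossing (under-strand top-left to bottom-right, over-strand top-right to bottom-left)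 with incoming colors $x$ (top-left), $y$ (top-right) the outgoing colors are $S^1(x,y)$ (bottom-left), $S^2(x,y)$ (bottom-right); at a negative classical crossing (over-strand top-left to bottom-right, under-strand top-right to bottom-left) with outgoing colors $x$ (bottom-left), $y$ (bottom-right) the incoming colors are $S^1(x,y)$ (top-left), $S^2(x,y)$ (top-right); at a virtual crossing with incoming $x$ (top-left), $y$ (top-right) the outgoing colors are $\beta^1(x,y)$ (bottom-left), $\beta^2(x,y)$ (bottom-right). Weights: $f(x,y)$ at a positive crossing, $f(x,y)^{-1}$ at a negative crossing, $g(x,y)$ at a virtual crossing (notation as just described). Choosing a base point on $K_i$, $\Psi_i(L,\mathcal C,f,g)$ is the product, in the order met while traversing $K_i$ along its orientation, of the weights of the classical crossings where $K_i$ passes along the under-strand and of the virtual crossings through which $K_i$ passes. $[h]$ is the conjugacy class of $h$. *)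

From mathcomp Require Import all_boot all_fingroup.
Set Implicit Arguments.
Unset Strict Implicit.
Unset Printing Implicit Defensive.

Record abs_group := AbsGroup {
  gcar :> Type;
  gmul : gcar -> gcar -> gcar;
  gone : gcar;
  ginv : gcar -> gcar;
  gmulA : forall a b c, gmul a (gmul b c) = gmul (gmul a b) c;
  gmul1 : forall a, gmul gone a = a;
  gmulr1 : forall a, gmul a gone = a;
  gmulV : forall a, gmul (ginv a) a = gone;
  gmulrV : forall a, gmul a (ginv a) = gone }.

Arguments gmul {a0}.
Arguments gone {a0}.
Arguments ginv {a0}.

Section Biquandles.
Variable X : Type.
Implicit Types (sigma : X * X -> X * X).

Definition c1 sigma x y := (sigma (x, y)).1.
Definition c2 sigma x y := (sigma (x, y)).2.

Definition idx sigma (t : X * X * X) : X * X * X :=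
  (t.1.1, (sigma (t.1.2, t.2)).1, (sigma (t.1.2, t.2)).2).
Definition xid sigma (t : X * X * X) : X * X * X :=
  ((sigma t.1).1, (sigma t.1).2, t.2).

Definition is_sfun sigma (s : X -> X) :=
  bijective s /\ (forall x y, sigma (x, y) = (x, y) <-> y = s x).

Definition is_biquandle sigma :=
  [/\ bijective sigma,
      (forall t, idx sigma (xid sigma (idx sigma t)) = xid sigma (idx sigma (xid sigma t))),
      (forall x z, exists! y, c1 sigma x y = z),
      (forall y t, exists! x, c2 sigma x y = t)
    & exists s, is_sfun sigma s].

Definition virtual_pair (S beta : X * X -> X * X) :=
  [/\ is_biquandle S, is_biquandle beta,
      (forall p, beta (beta p) = p)
    & (forall t, idx beta (xid S (idx beta t)) = xid beta (idx S (xid beta t)))].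
End Biquandles.

Section Cocycles.
Variables (X : Type) (H : abs_group) (S beta : X * X -> X * X) (s sb : X -> X).
Local Notation "a * b" := (gmul a b).
Local Notation "1" := (@gone H).
Local Notation S1 := (c1 S).
Local Notation S2 := (c2 S).
Local Notation B1 := (c1 beta).
Local Notation B2 := (c2 beta).

(* noncommutative 2-cocycle pair (f,g); s = s_S, sb = s_beta *)
Definition cocycle_pair (f g : X -> X -> H) :=
  (forall x y z, f x y * f (S2 x y) z = f x (S1 y z) * f (S2 x (S1 y z)) (S2 y z)) /\
  (forall x y z, f (S1 x y) (S1 (S2 x y) z) = f y z) /\
  (forall x, f x (s x) = 1) /\
  (forall x, g x (sb x) = 1) /\
  (forall x y, g x y * g (B1 x y) (B2 x y) = 1) /\
  (forall x y z, g x y * g (B2 x y) z = g x (B1 y z) * g (B2 x (B1 y z)) (B2 y z)) /\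
  (forall x y z, g y z * g (B2 x (B1 y z)) (B2 y z) = g x y * g (B1 x y) (B1 (B2 x y) z)) /\
  (forall x y z, g y z * g x (B1 y z) = g (B2 x y) z * g (B1 x y) (B1 (B2 x y) z)) /\
  (forall x y z, g y z = g (S1 x y) (B1 (S2 x y) z)) /\
  (forall x y z, g y z * g x (B1 y z) = g (S2 x y) z * g (S1 x y) (B1 (S2 x y) z)) /\
  (forall x y z, g x (B1 y z) * f (B2 x (B1 y z)) (B2 y z) = f x y * g (S2 x y) z).

Definition cohomologous (f ft g : X -> X -> H) :=
  exists lam : X -> H,
    forall x y,
      [/\ ft x y = (lam x * f x y) * ginv (lam (S2 x y)),
          lam x = lam (s x),
          lam y = lam (S1 x y),
          lam y = lam (B1 x y)
        & lam x * g x y = g x y * lam x].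
End Cocycles.

(* ---------- Oriented virtual link diagrams (combinatorial model) ----------
   Crossings are indexed by 'I_ncr, each drawn with both strands going down.
   A port is (c, side) with side = false for left, true for right.
   Each crossing has incoming ports (top-left, top-right) and outgoing ports
   (bottom-left, bottom-right). A semi-arc leaves outgoing port o and enters
   incoming port (nxt o); nxt is a bijection.  In every crossing type the strand
   entering top-left leaves bottom-right and the one entering top-right leaves
   bottom-left. *)
Inductive ctype := Pos | Neg | Virt.

Record vdiagram := VDiagram {
  ncr : nat;
  kind : 'I_ncr -> ctype;
  nxt : {perm ('I_ncr * bool)} }.

Definition step (D : vdiagram) (p : 'I_(ncr D) * bool) : 'I_(ncr D) * bool :=
  nxt D (p.1, ~~ p.2).

Section Colorings.
Variables (X : Type) (S beta : X * X -> X * X) (D : vdiagram).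
(* a coloring assigns to each semi-arc (identified with its terminal incoming
   port) a color *)
Variable col : 'I_(ncr D) * bool -> X.
Definition cin c (b : bool) := col (c, b).
Definition cout c (b : bool) := col (nxt D (c, b)).

Definition is_coloring :=
  forall c, match kind c with
  | Pos => S (cin c false, cin c true) = (cout c false, cout c true)
  | Neg => S (cout c false, cout c true) = (cin c false, cin c true)
  | Virt => beta (cin c false, cin c true) = (cout c false, cout c true)
  end.

Variables (H : abs_group) (f g : X -> X -> H).
(* weight picked up when traversing crossing p.1 entering at side p.2 *)
Definition weight (p : 'I_(ncr D) * bool) : H :=
  let c := p.1 in
  match kind c with
  | Pos => if p.2 then gone else f (cin c false) (cin c true)     (* under: TL -> BR *)
  | Neg => if p.2 then ginv (f (cout c false) (cout c true)) else gone (* under: TR -> BL *)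
  | Virt => g (cin c false) (cin c true)
  end.

(* Psi of the component through base point p (an incoming port), reading the
   weights in the order met along the orientation *)
Definition Psi (p : 'I_(ncr D) * bool) : H :=
  foldr gmul gone (map weight (fingraph.orbit (@step D) p)).
End Colorings.

(** The cohomology [lam] acts as a gauge transformation on semi-arcs: at every
    crossing, the weight of [ft] met when entering along a semi-arc of colour
    [x] and leaving along one of colour [x'] equals [lam x * w * (lam x')^-1],
    where [w] is the weight of [f].  For over-strands and virtual crossings this
    uses the invariance of [lam] under [S^1], [beta^1] and (via [beta^2 = id])
    [beta^2], together with the commutation of [lam x] with [g x y], which
    (g2) transfers to [lam y].  None of the other cocycle identities is needed.
    Along a component the product therefore telescopes, and since the
    component closes up, [Psi_i] for [ft] is the conjugate of [Psi_i] for [f]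
    by [lam] of the colour at the base point. *)
From mathcomp Require Import all_boot perm.

Set Implicit Arguments.
Unset Strict Implicit.
Unset Printing Implicit Defensive.

Section GroupFacts.
Variable H : abs_group.
Implicit Types a b c : H.
Local Notation "a * b" := (gmul a b).

Lemma gmulKg a b : ginv a * (a * b) = b.
Proof. by rewrite gmulA gmulV gmul1. Qed.

Lemma gmulgK a b : a * b * ginv b = a.
Proof. by rewrite -gmulA gmulrV gmulr1. Qed.

Lemma ginvK a : ginv (ginv a) = a.
Proof. by rewrite -[RHS](gmulKg (ginv a)) gmulV gmulr1. Qed.

Lemma ginvM a b : ginv (a * b) = ginv b * ginv a.
Proof.
rewrite -[RHS]gmulr1 -(gmulrV (a * b)) !gmulA.
by rewrite -(gmulA (ginv b)) gmulV gmulr1 gmulV gmul1.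
Qed.

Lemma ginv_conj a b c : ginv (a * b * ginv c) = c * ginv b * ginv a.
Proof. by rewrite !ginvM ginvK gmulA. Qed.

Lemma ginv_of_gmul_eq1 a b : a * b = gone -> a = ginv b.
Proof. by move=> ab1; rewrite -[LHS]gmulr1 -(gmulrV b) gmulA ab1 gmul1. Qed.

Lemma gmul_conj_commute a b : a * b = b * a -> a * b * ginv a = b.
Proof. by move->; rewrite gmulgK. Qed.

Lemma ginv_commute a b : a * b = b * a -> a * ginv b = ginv b * a.
Proof.
move=> ab; rewrite -[LHS]gmul1 -(gmulV b) -!gmulA; congr (_ * _).
by rewrite gmulA -ab gmulgK.
Qed.

Lemma gmul_conjK a b c : ginv a * (a * b * ginv c) * c = b.
Proof. by rewrite !gmulA gmulV gmul1 -gmulA gmulV gmulr1. Qed.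

Lemma foldr_gmul_traject_gauge (T : Type) (next : T -> T) (u v L : T -> H) :
    (forall t, v t = L t * u t * ginv (L (next t))) ->
  forall n t, foldr gmul gone (map v (traject next t n))
    = L t * foldr gmul gone (map u (traject next t n)) * ginv (L (iter n next t)).
Proof.
move=> uv; elim=> [|n IHn] t /=; first by rewrite gmulr1 gmulrV.
rewrite uv IHn -iterS iterSr -!gmulA; congr (_ * _); congr (_ * _).
by rewrite gmulKg.
Qed.

End GroupFacts.

Lemma c1c2_eq (X : Type) (sigma : X * X -> X * X) x y u v :
  sigma (x, y) = (u, v) -> u = c1 sigma x y /\ v = c2 sigma x y.
Proof. by rewrite /c1 /c2 => ->. Qed.

Lemma step_inj (D : vdiagram) : injective (@step D).
Proof. by move=> [c b] [c' b']; rewrite /step /= => /perm_inj [-> /negb_inj ->]. Qed.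

Section Gauge.
Variables (X : Type) (H : abs_group) (S beta : X * X -> X * X).
Variables (f ft g : X -> X -> H) (lam : X -> H).
Local Notation "a * b" := (gmul a b).

Hypothesis beta_invol : involutive beta.
Hypothesis g_mulB : forall x y, g x y * g (c1 beta x y) (c2 beta x y) = gone.
Hypothesis ft_gauge : forall x y, ft x y = lam x * f x y * ginv (lam (c2 S x y)).
Hypothesis lam_S1 : forall x y, lam (c1 S x y) = lam y.
Hypothesis lam_B1 : forall x y, lam (c1 beta x y) = lam y.
Hypothesis lam_g_commute : forall x y, lam x * g x y = g x y * lam x.

Lemma lam_B2 x y : lam (c2 beta x y) = lam x.
Proof.
rewrite -(lam_B1 (c1 beta x y)).
by rewrite /c1 /c2 -surjective_pairing beta_invol.
Qed.

Lemma lam_g_commute_right x y : lam y * g x y = g x y * lam y.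
Proof.
rewrite (ginv_of_gmul_eq1 (g_mulB x y)) -(lam_B1 x y).
by apply: ginv_commute; apply: lam_g_commute.
Qed.

Variables (D : vdiagram) (col : 'I_(ncr D) * bool -> X).
Hypothesis col_ok : is_coloring S beta col.

Lemma weight_gauge q :
  weight col ft g q = lam (col q) * weight col f g q * ginv (lam (col (step q))).
Proof.
case: q => c b; rewrite /weight /step /=.
have := col_ok c; rewrite /cin /cout.
case: (kind c) => /= E; have [o1 o2] := c1c2_eq E; case: b => /=.
- by rewrite o1 lam_S1 gmulr1 gmulrV.
- by rewrite o2 ft_gauge.
- by rewrite o2 ft_gauge ginv_conj.
- by rewrite o1 lam_S1 gmulr1 gmulrV.
- by rewrite o1 lam_B1 gmul_conj_commute // lam_g_commute_right.
- by rewrite o2 lam_B2 gmul_conj_commute // lam_g_commute.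
Qed.

Lemma Psi_gauge p :
  Psi col ft g p = lam (col p) * Psi col f g p * ginv (lam (col p)).
Proof.
rewrite /Psi /orbit (foldr_gmul_traject_gauge weight_gauge).
by rewrite iter_order //; apply: step_inj.
Qed.

End Gauge.

Theorem mainTheorem7 (X : Type) (H : abs_group) (S beta : X * X -> X * X)
    (s sb : X -> X) (f ft g : X -> X -> H) :
  virtual_pair S beta -> is_sfun S s -> is_sfun beta sb ->
  cocycle_pair S beta s sb f g -> cocycle_pair S beta s sb ft g ->
  cohomologous S beta s f ft g ->
  forall (D : vdiagram) (col : 'I_(ncr D) * bool -> X),
    is_coloring S beta col ->
    forall p : 'I_(ncr D) * bool,
      exists h : H,
        Psi col f g p = gmul (gmul h (Psi col ft g p)) (ginv h).
Proof.
move=> [_ _ beta_invol _] _ _ [_ [_ [_ [_ [g_mulB _]]]]] _ [lam cohom] D col col_ok p.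
have ft_gauge x y : ft x y = gmul (gmul (lam x) (f x y)) (ginv (lam (c2 S x y))).
  by case: (cohom x y).
have lam_S1 x y : lam (c1 S x y) = lam y by case: (cohom x y).
have lam_B1 x y : lam (c1 beta x y) = lam y by case: (cohom x y).
have lam_g_commute x y : gmul (lam x) (g x y) = gmul (g x y) (lam x).
  by case: (cohom x y).
exists (ginv (lam (col p))).
rewrite (Psi_gauge beta_invol g_mulB ft_gauge lam_S1 lam_B1 lam_g_commute col_ok).
by rewrite ginvK gmul_conjK.
Qed.
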